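(* Let $t\in\mathbb C\setminus\{0,-1,-2,\dots\}$ and let $(m_{p,q})_{p,q\ge0}$ be complex numbers satisfying $$m_{p+1,q}+m_{p,q+1}-(p+q+1)m_{p,q}=m_{p,0}\,m_{0,q}\quad(p,q=0,1,2,\dots),\qquad m_{0,0}=t.$$ For a Young diagram $\lambda=(p_1,\dots,p_d\,|\,q_1,\dots,q_d)$ with $n=|\lambda|$ set $$\varphi(\lambda)=\frac{\det[m_{p_i,q_j}]_{i,j=1}^d}{t(t+1)\cdots(t+n-1)}$$ (with $\varphi(\varnothing)=1$). Then $\varphi$ is harmonic on the Young graph: $\varphi(\lambda)=\sum_{\nu:\ \nu\searrow\lambda}\varphi(\nu)$ for every Young diagram $\lambda$.
   Context: Frobenius notation: for a Young diagram $\lambda$, $d$ is the number of diagonal boxes, $p_i=\lambda_i-i$ and $q_i=\lambda'_i-i$ ($1\le i\le d$), where $\lambda'$ is the transposed diagram; $|\lambda|=\sum_i(p_i+q_i+1)$ is the number of boxes. $\nu\searrow\lambda$ means that $\nu$ is a Young diagram obtained from $\lambda$ by adding one box. *)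

(* Complex numbers are modelled as R[i] = complex R for an
   arbitrary R : realType (a model of the real numbers), i.e. C = R[i]. *)
From HB Require Import structures.
From mathcomp Require Import all_boot all_order all_algebra.
From mathcomp Require Import complex.
From mathcomp Require Import reals.
Set Implicit Arguments. Unset Strict Implicit. Unset Printing Implicit Defensive.
Import Order.TTheory GRing.Theory Num.Theory.

(* A Young diagram is represented by its row lengths lambda_1 >= lambda_2 >= ...
   > 0, as a seq nat (0-indexed: row i+1 is nth 0 s i). *)
Definition is_young (s : seq nat) : bool :=
  sorted (fun x y : nat => y <= x) s && all (fun x => 0 < x) s.

Definition ysize (s : seq nat) : nat := sumn s.

(* column lengths: lambda'_{j+1} = #{ k : lambda_k > j } *)
Definition yconj (s : seq nat) (j : nat) : nat := count (fun x => j < x) s.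

(* number of diagonal boxes d: #{ i >= 1 : lambda_i >= i } *)
Definition frob_d (s : seq nat) : nat :=
  count (fun i => i < nth 0 s i) (iota 0 (size s)).

(* Frobenius coordinates, 0-indexed: p_{i+1} = lambda_{i+1} - (i+1),
   q_{i+1} = lambda'_{i+1} - (i+1). *)
Definition frob_p (s : seq nat) (i : nat) : nat := (nth 0 s i - i.+1)%N.
Definition frob_q (s : seq nat) (i : nat) : nat := (yconj s i - i.+1)%N.

Definition adds_box (nu lam : seq nat) : Prop :=
  is_young nu /\ (forall i, (nth 0 lam i <= nth 0 nu i)%N) /\
  ysize nu = (ysize lam).+1.

Local Open Scope ring_scope.

Definition phi (R : realType) (t : R[i]) (m : nat -> nat -> R[i]) (lam : seq nat)
  : R[i] :=
  \det (\matrix_(i < frob_d lam, j < frob_d lam) m (frob_p lam i) (frob_q lam j))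
  / \prod_(k < ysize lam) (t + k%:R).

(* Adding a box to lambda = (p | q) either raises one p_i (in a row i < d), or
   raises one q_j (in a column j < d), or creates a new diagonal box, giving
   (p, 0 | q, 0).  The sum of det[m_{p_i q_j}] over the successors of lambda equals
   the sum over all these d + d + 1 shifts, since a shift at a place where no
   box can be added yields a determinant with two equal rows or columns.
   Expanding each shifted determinant along the shifted line, and the bordered
   one along its new row and column, the recurrence for m turns this sum into
   (m_00 + sum_i (p_i + q_i + 1)) det[m_{p_i q_j}] = (t + |lambda|) det[m_{p_i q_j}],
   and dividing by t (t + 1) ... (t + |lambda|) gives phi(lambda). *)

From HB Require Import structures.
From mathcomp Require Import all_boot all_order all_algebra.
From mathcomp Require Import complex reals.
From mathcomp Require Import zify ring.
Set Implicit Arguments. Unset Strict Implicit. Unset Printing Implicit Defensive.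
Import Order.TTheory GRing.Theory Num.Theory.

(** * Adding a box to a Young diagram *)

Lemma count_iota_downclosed (Q : pred nat) n :
  (forall k, Q k.+1 -> Q k) -> (forall k, Q k -> k < n) ->
  forall k, (k < count Q (iota 0 n)) = Q k.
Proof.
move=> Qdown Qlt.
have QdownW j k : j <= k -> Q k -> Q j.
  by move/subnKC <-; elim: (k - j) => [|i IH]; rewrite ?addn0 // addnS => /Qdown.
have nQn : ~~ Q n by apply/negP => /Qlt; rewrite ltnn.
have [c nQc c_min] := ex_minnP (ex_intro (fun k => ~~ Q k) n nQn).
have Qc k : Q k = (k < c).
  apply/idP/idP => [Qk | kc]; first by rewrite ltnNge; apply: contra nQc => /QdownW; apply.
  by apply: contraTT kc; rewrite -leqNgt; apply: c_min.
move=> k; rewrite (eq_count Qc) -size_filter (filter_iota_ltn 0 (c_min _ nQn)).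
by rewrite size_iota Qc.
Qed.

Lemma young_nth_le s i j : is_young s -> i <= j -> nth 0 s j <= nth 0 s i.
Proof.
case/andP => s_sorted _ le_ij.
have [lt_js | le_sj] := ltnP j (size s); last by rewrite nth_default.
have geq_trans : transitive (fun x y : nat => y <= x).
  by move=> x y z /= le_yx le_zy; apply: leq_trans le_zy le_yx.
by apply: (sorted_leq_nth geq_trans leqnn) => //; rewrite inE (leq_ltn_trans le_ij).
Qed.

Lemma young_nth_gt0 s k : is_young s -> (0 < nth 0 s k) = (k < size s).
Proof.
case/andP => _ /(all_nthP 0) s_pos; apply/idP/idP => [|/s_pos //].
by apply: contraTT; rewrite -leqNgt => /(nth_default 0) ->.
Qed.

Lemma yconjP s j k : is_young s -> (k < yconj s j) = (j < nth 0 s k).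
Proof.
move=> Ys; rewrite /yconj -{1}(mkseq_nth 0 s) /mkseq count_map.
apply: (count_iota_downclosed (Q := fun k => j < nth 0 s k)) => {}k /= lt_j.
  exact: leq_trans lt_j (young_nth_le Ys (leqnSn k)).
by rewrite -(young_nth_gt0 _ Ys) (leq_ltn_trans _ lt_j).
Qed.

Lemma frob_dP s k : is_young s -> (k < frob_d s) = (k < nth 0 s k).
Proof.
move=> Ys; apply: (count_iota_downclosed (Q := fun k => k < nth 0 s k)) => {}k /= lt_k.
  exact: leq_trans (ltnW lt_k) (young_nth_le Ys (leqnSn k)).
by rewrite -(young_nth_gt0 _ Ys) (leq_ltn_trans _ lt_k).
Qed.

Definition addable (s : seq nat) i := (i == 0) || (nth 0 s i < nth 0 s i.-1).

Lemma incr_nth_gt0 s i k : is_young s -> i <= size s ->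
  (0 < nth 0 (incr_nth s i) k) = (k < size (incr_nth s i)).
Proof.
move=> Ys le_i; rewrite size_incr_nth nth_incr_nth addn_gt0 (young_nth_gt0 _ Ys).
by case: (i =P k) => [<- | ne_ik] /=; case: (ltnP i (size s)) => /=; lia.
Qed.

Lemma young_incr_nth s i :
  is_young s -> i <= size s -> addable s i -> is_young (incr_nth s i).
Proof.
move=> Ys le_i add_i; apply/andP; split.
  apply/(sortedP 0) => k _; rewrite !nth_incr_nth.
  case: (i =P k.+1) add_i => [-> | _] add_i.
    by move: add_i; rewrite /addable /= (gtn_eqF (ltnSn k)).
  by rewrite (leq_trans (young_nth_le Ys (leqnSn k))) ?leq_addl.
by apply/(all_nthP 0) => k; rewrite /= incr_nth_gt0.
Qed.

Lemma addable_young_incr s i : is_young (incr_nth s i) -> addable s i.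
Proof.
case: i => [// | i] /young_nth_le le_nth; have := le_nth _ _ (leqnSn i).
by rewrite !nth_incr_nth eqxx /addable /=; lia.
Qed.

Lemma sumn_incr_nth s i : sumn (incr_nth s i) = (sumn s).+1.
Proof.
elim: s i => [|x s IH] [|i] //=; last by rewrite IH addnS.
by rewrite sumn_ncons.
Qed.

Lemma sumn_head_behead s : sumn s = head 0 s + sumn (behead s).
Proof. by case: s. Qed.

Lemma leq_sumn_nth s t : (forall k, nth 0 s k <= nth 0 t k) -> sumn s <= sumn t.
Proof.
elim: s t => [// | x s IH] t le_st; rewrite [sumn t]sumn_head_behead.
apply: leq_add; first exact: (le_st 0).
by apply: IH => k; rewrite nth_behead; apply: (le_st k.+1).
Qed.

Lemma eq_nth_of_sumn_leq s t :
  (forall k, nth 0 s k <= nth 0 t k) -> sumn t <= sumn s ->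
  forall k, nth 0 t k = nth 0 s k.
Proof.
elim: t s => [|y t IH] s le_st le_sum k; first by have := le_st k; rewrite nth_nil; lia.
have le_st' k' : nth 0 (behead s) k' <= nth 0 t k'.
  by rewrite nth_behead; apply: (le_st k'.+1).
have le_head := le_st 0; have le_tail := leq_sumn_nth le_st'.
rewrite /= nth0 in le_head; rewrite /= [sumn s]sumn_head_behead in le_sum.
case: k => [|k] /=; first by rewrite nth0; lia.
by rewrite -nth_behead; apply: IH => //; lia.
Qed.

Lemma incr_nth_of_sumn s t :
  (forall k, nth 0 s k <= nth 0 t k) -> sumn t = (sumn s).+1 ->
  exists i, forall k, nth 0 t k = nth 0 (incr_nth s i) k.
Proof.
elim: t s => [|y t IH] s le_st; first by [].
have le_st' k : nth 0 (behead s) k <= nth 0 t k.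
  by rewrite nth_behead; apply: (le_st k.+1).
have le_head := le_st 0; have le_tail := leq_sumn_nth le_st'.
rewrite /= nth0 in le_head; rewrite /= [sumn s]sumn_head_behead => sum_t.
have [y_eq | [y_eq sum_eq]] : y = head 0 s \/ y = (head 0 s).+1 /\ sumn t = sumn (behead s).
- by lia.
- have [i eq_t] := IH (behead s) le_st' ltac:(lia).
  by exists i.+1 => -[|k]; rewrite nth_incr_nth //= eq_t nth_incr_nth nth_behead.
- have eq_t := eq_nth_of_sumn_leq le_st' (eq_leq sum_eq).
  by exists 0 => -[|k]; rewrite nth_incr_nth //= eq_t nth_behead.
Qed.

Lemma adds_boxP s nu : is_young s ->
  adds_box nu s <-> exists2 i, (i <= size s) && addable s i & nu = incr_nth s i.
Proof.
move=> Ys; split=> [[Ynu [le_nu sum_nu]] | [i /andP [le_i add_i] ->]]; last first.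
  split; first exact: young_incr_nth.
  by split=> [k | ]; rewrite ?nth_incr_nth ?leq_addl // /ysize sumn_incr_nth.
have [i eq_nu] := incr_nth_of_sumn le_nu sum_nu.
have le_i : i <= size s.
  rewrite leqNgt; apply/negP => lt_si; have := young_nth_le Ynu (ltnW lt_si).
  by rewrite !eq_nu !nth_incr_nth eqxx (gtn_eqF lt_si) !nth_default // ltnW.
have nu_eq : nu = incr_nth s i.
  apply: (@eq_from_nth _ 0) => [|k _]; last exact: eq_nu.
  by apply/eqP/eqn_gtP => k; rewrite -(young_nth_gt0 _ Ynu) eq_nu incr_nth_gt0.
by exists i; rewrite // le_i addable_young_incr // -nu_eq.
Qed.

Lemma big_adds_box (R : Type) (idx : R) (op : Monoid.com_law idx)
    (F : seq nat -> R) s succ :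
  is_young s -> uniq succ -> (forall nu, nu \in succ <-> adds_box nu s) ->
  \big[op/idx]_(nu <- succ) F nu
  = \big[op/idx]_(i < (size s).+1 | addable s i) F (incr_nth s i).
Proof.
move=> Ys succ_uniq succ_adds.
have succ_perm : perm_eq succ [seq incr_nth s i | i <- iota 0 (size s).+1 & addable s i].
  apply: uniq_perm => //.
    by rewrite map_inj_uniq ?filter_uniq ?iota_uniq //; apply: incr_nth_inj.
  move=> nu; apply/idP/mapP.
    case/succ_adds/(adds_boxP _ Ys) => i /andP [le_i add_i] ->.
    by exists i; rewrite // mem_filter mem_iota ltnS le_i add_i.
  case=> i; rewrite mem_filter mem_iota ltnS => /andP [add_i /= le_i] ->.
  by apply/succ_adds/(adds_boxP _ Ys); exists i; rewrite ?le_i.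
rewrite (perm_big _ succ_perm) big_map big_filter.
by rewrite -(big_mkord (addable s) (fun i => F (incr_nth s i))) /index_iota subn0.
Qed.

(** * Frobenius coordinates *)

Lemma sum_ord_between a b N : b <= N -> \sum_(x < N) ((a <= x) && (x < b)) = b - a.
Proof.
move=> le_bN; suff -> : \sum_(x < N) ((a <= x) && (x < b)) = minn N b - a.
  by congr (_ - _); lia.
elim: N {le_bN} => [|N IH]; first by rewrite big_ord0; lia.
by rewrite big_ord_recr /= IH; case: (leqP a N); case: (ltnP N b) => /=; lia.
Qed.

Lemma sum_ord_zero_tail N e (f : nat -> nat) : e <= N -> (forall k, e <= k -> f k = 0) ->
  \sum_(k < N) f k = \sum_(k < e) f k.
Proof.
move=> le_eN f_tail; rewrite (big_ord_widen N f le_eN) (bigID (fun k : 'I_N => k < e)) /=.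
by rewrite [X in _ + X]big1 ?addn0 // => k; rewrite -leqNgt => /f_tail.
Qed.

Lemma sumn_nth_ord s N : size s <= N -> sumn s = \sum_(k < N) nth 0 s k.
Proof.
elim: s N => [|x s IH] N le_sN; first by rewrite big1 // => k; rewrite nth_nil.
by case: N le_sN => [// | N] le_sN; rewrite big_ord_recl /= (IH N le_sN).
Qed.

Section FrobeniusCoordinates.
Variable s : seq nat.
Hypothesis Ys : is_young s.
Local Notation l := (nth 0 s).
Local Notation d := (frob_d s).

Lemma frob_d_le_size : d <= size s.
Proof.
by rewrite leqNgt; apply/negP => lt_sd; move: (lt_sd); rewrite (frob_dP _ Ys) nth_default.
Qed.

Lemma frob_d_le_nth k : k < d -> d <= l k.
Proof.
move=> lt_kd; have : d.-1 < l d.-1 by rewrite -(frob_dP _ Ys); lia.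
by have := young_nth_le Ys (ltac:(lia) : k <= d.-1); lia.
Qed.

Lemma frob_d_le_yconj k : k < d -> d <= yconj s k.
Proof.
move=> lt_kd; have le_d := frob_d_le_nth (ltac:(lia) : d.-1 < d).
suff : d.-1 < yconj s k by lia.
by rewrite (yconjP _ _ Ys); lia.
Qed.

Lemma nth_frob_d_le : l d <= d.
Proof. by rewrite leqNgt -(frob_dP _ Ys) ltnn. Qed.

Lemma nth_le_frob_d i : d <= i -> l i <= d.
Proof. by move=> le_di; apply: leq_trans (young_nth_le Ys le_di) nth_frob_d_le. Qed.

Lemma yconj_addable i : addable s i -> yconj s (l i) = i.
Proof.
move=> add_i; apply/eqP/eqn_gtP => k; rewrite (yconjP _ _ Ys).
case: (ltnP k i) => [lt_ki | le_ik]; last by apply/negbTE; rewrite -leqNgt young_nth_le.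
have : l i < l i.-1 by move: add_i; rewrite /addable; lia.
by have := young_nth_le Ys (ltac:(lia) : k <= i.-1); lia.
Qed.

Lemma frob_p_not_addable i : i < d -> ~~ addable s i -> frob_p s i.-1 = (frob_p s i).+1.
Proof.
move=> lt_id; rewrite /addable negb_or => /andP [i_gt0 le_l].
have := young_nth_le Ys (leq_pred i); have := (frob_dP i Ys); rewrite lt_id /frob_p; lia.
Qed.

Section AddInRow.
Variable i : nat.
Hypothesis lt_id : i < d.
Hypothesis add_i : addable s i.
Let Ynu : is_young (incr_nth s i) :=
  young_incr_nth Ys (leq_trans (ltnW lt_id) frob_d_le_size) add_i.

Lemma frob_d_incr_row : frob_d (incr_nth s i) = d.
Proof.
apply/eqP/eqn_gtP => k; rewrite (frob_dP _ Ynu) (frob_dP _ Ys) nth_incr_nth.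
by case: eqP => [<- | _] //; have := frob_dP i Ys; rewrite lt_id; lia.
Qed.

Lemma frob_p_incr_row k : k < d -> frob_p (incr_nth s i) k = frob_p s k + (k == i).
Proof.
move=> lt_kd; rewrite /frob_p nth_incr_nth eq_sym.
by have := frob_dP k Ys; rewrite lt_kd; lia.
Qed.

Lemma frob_q_incr_row j : j < d -> frob_q (incr_nth s i) j = frob_q s j.
Proof.
move=> lt_jd; rewrite /frob_q; congr (_ - _); apply/eqP/eqn_gtP => k.
rewrite (yconjP _ _ Ynu) (yconjP _ _ Ys) nth_incr_nth.
by case: eqP => [<- | _] //; have := frob_d_le_nth lt_id; lia.
Qed.
End AddInRow.

Section AddInColumn.
Variable i : nat.
Hypotheses (le_di : d <= i) (le_i : i <= size s) (add_i : addable s i) (lt_ld : l i < d).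
Let Ynu : is_young (incr_nth s i) := young_incr_nth Ys le_i add_i.

Lemma frob_d_incr_col : frob_d (incr_nth s i) = d.
Proof.
apply/eqP/eqn_gtP => k; rewrite (frob_dP _ Ynu) (frob_dP _ Ys) nth_incr_nth.
by case: eqP => [<- | _] //; lia.
Qed.

Lemma frob_p_incr_col k : k < d -> frob_p (incr_nth s i) k = frob_p s k.
Proof. by move=> lt_kd; rewrite /frob_p nth_incr_nth (_ : (i == k) = false) //; lia. Qed.

Lemma frob_q_incr_col k : k < d -> frob_q (incr_nth s i) k = frob_q s k + (k == l i).
Proof.
move=> lt_kd; rewrite /frob_q; case: (k =P l i) => [-> | ne_k].
  have -> : yconj (incr_nth s i) (l i) = i.+1.
    apply/eqP/eqn_gtP => k'; rewrite (yconjP _ _ Ynu) nth_incr_nth.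
    case: (i =P k') => [<- | ne_ik]; first by rewrite add1n !ltnSn.
    by rewrite add0n -(yconjP _ _ Ys) yconj_addable //; lia.
  by rewrite yconj_addable //; lia.
rewrite addn0; congr (_ - _); apply/eqP/eqn_gtP => k'.
by rewrite (yconjP _ _ Ynu) (yconjP _ _ Ys) nth_incr_nth; case: eqP => [<- | _] //; lia.
Qed.
End AddInColumn.

Section AddOnDiagonal.
Variable i : nat.
Hypotheses (le_di : d <= i) (le_i : i <= size s) (add_i : addable s i) (eq_ld : l i = d).
Let Ynu : is_young (incr_nth s i) := young_incr_nth Ys le_i add_i.

Lemma diagonal_row : i = d.
Proof.
apply/eqP; rewrite eqn_leq le_di andbT leqNgt; apply/negP => lt_di.
have : l i < l i.-1 by move: add_i; rewrite /addable; lia.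
by have := nth_le_frob_d (ltac:(lia) : d <= i.-1); lia.
Qed.

Lemma nth_frob_d : l d = d.
Proof. by rewrite -{1}diagonal_row. Qed.

Lemma frob_d_incr_diag : frob_d (incr_nth s i) = d.+1.
Proof.
apply/eqP/eqn_gtP => k; rewrite (frob_dP _ Ynu) nth_incr_nth diagonal_row.
case: (d =P k) => [<- | ne_dk]; first by rewrite nth_frob_d !ltnSn.
by rewrite add0n -(frob_dP _ Ys); lia.
Qed.

Lemma frob_p_incr_diag k : k < d.+1 ->
  frob_p (incr_nth s i) k = if k < d then frob_p s k else 0.
Proof.
move=> lt_kd; rewrite /frob_p nth_incr_nth diagonal_row.
case: (ltnP k d) => [lt_k | le_dk]; first by rewrite (_ : (d == k) = false) //; lia.
have -> : k = d by lia.
by rewrite eqxx nth_frob_d add1n subnn.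
Qed.

Lemma frob_q_incr_diag k : k < d.+1 ->
  frob_q (incr_nth s i) k = if k < d then frob_q s k else 0.
Proof.
move=> lt_kd; rewrite /frob_q; case: (ltnP k d) => [lt_k | le_dk].
  congr (_ - _); apply/eqP/eqn_gtP => k'.
  rewrite (yconjP _ _ Ynu) (yconjP _ _ Ys) nth_incr_nth diagonal_row.
  by case: eqP => [<- | _] //; rewrite nth_frob_d; lia.
have -> : k = d by lia.
suff -> : yconj (incr_nth s i) d = d.+1 by rewrite subnn.
apply/eqP/eqn_gtP => k'; rewrite (yconjP _ _ Ynu) nth_incr_nth diagonal_row.
case: (d =P k') => [<- | ne_dk]; first by rewrite nth_frob_d !ltnSn.
rewrite add0n; case: (ltnP k' d) => [lt_k'd | le_dk'].
  have : l d < l d.-1 by move: add_i; rewrite diagonal_row /addable; lia.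
  by have := young_nth_le Ys (ltac:(lia) : k' <= d.-1); rewrite nth_frob_d; lia.
by have := young_nth_le Ys le_dk'; rewrite nth_frob_d; lia.
Qed.
End AddOnDiagonal.

Lemma frob_q_col_not_addable j : j < d -> l (yconj s j) != j ->
  0 < j /\ frob_q s j.-1 = (frob_q s j).+1.
Proof.
move=> lt_jd; set i := yconj s j; move/eqP => ne_lj.
have le_lj : l i <= j by rewrite leqNgt -(yconjP _ _ Ys) ltnn.
have le_di := frob_d_le_yconj lt_jd.
have j_gt0 : 0 < j by lia.
have yconj_pred : yconj s j.-1 = i.
  apply/eqP/eqn_gtP => k; rewrite !(yconjP _ _ Ys).
  case: (ltnP k i) => [lt_ki | le_ik]; last by have := young_nth_le Ys le_ik; lia.
  have : j < l k by rewrite -(yconjP _ _ Ys).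
  lia.
by split=> //; rewrite /frob_q yconj_pred prednK //; lia.
Qed.

Lemma frob_d0_diag_addable : d = 0 ->
  [&& addable s (yconj s d), d <= yconj s d & l (yconj s d) == d].
Proof.
move=> d0; have l0 : l 0 = 0 by have := nth_frob_d_le; rewrite d0; lia.
have size0 : size s = 0 by apply/eqP; rewrite -leqn0 leqNgt -(young_nth_gt0 _ Ys) l0.
suff -> : yconj s d = 0 by rewrite d0 /addable /= l0.
by rewrite /yconj (size0nil size0).
Qed.

Lemma ysize_frob : ysize s = \sum_(i < d) (frob_p s i + frob_q s i + 1).
Proof.
(* Row k has its boxes in columns c >= k (the arm, p_k + 1 of them) and in
   columns c < k (counted column by column, these make up the legs q_c). *)
set N := size s + l 0.
have le_sN : size s <= N by apply: leq_addr.
have le_dN : d <= N by apply: leq_trans frob_d_le_size le_sN.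
have le_lN k : l k <= N by apply: leq_trans (young_nth_le Ys (leq0n k)) (leq_addl _ _).
rewrite /ysize (sumn_nth_ord le_sN).
have split_rows : \sum_(k < N) l k = \sum_(k < N) \sum_(c < N) ((k <= c) && (c < l k))
                                 + \sum_(k < N) \sum_(c < N) ((c < k) && (c < l k)).
  rewrite -big_split; apply: eq_bigr => k _; rewrite -big_split /=.
  rewrite -{1}[l k]subn0 -(sum_ord_between 0 (le_lN k)); apply: eq_bigr => c _.
  by case: (leqP k c); case: (ltnP c (l k)).
have arms : \sum_(k < N) \sum_(c < N) ((k <= c) && (c < l k)) = \sum_(k < d) (l k - k).
  rewrite (eq_bigr (fun k : 'I_N => l k - k)) => [|k _]; last exact: sum_ord_between.
  apply: (@sum_ord_zero_tail _ _ (fun k => l k - k)) => // k le_dk.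
  by have := frob_dP k Ys; rewrite ltnNge le_dk /=; lia.
have legs : \sum_(k < N) \sum_(c < N) ((c < k) && (c < l k))
              = \sum_(c < d) (yconj s c - c.+1).
  rewrite exchange_big (eq_bigr (fun c : 'I_N => yconj s c - c.+1)) => [|c _].
    apply: (@sum_ord_zero_tail _ _ (fun c => yconj s c - c.+1)) => // c le_dc.
    apply/eqP; rewrite subn_eq0 leqNgt (yconjP _ _ Ys); apply/negP => lt_c.
    have := young_nth_le Ys (leqnSn c).
    by have := frob_dP c Ys; rewrite ltnNge le_dc /=; lia.
  rewrite -(sum_ord_between c.+1 (leq_trans (count_size _ _) le_sN)).
  by apply: eq_bigr => k _; rewrite (yconjP _ _ Ys).
rewrite split_rows arms legs -big_split /=; apply: eq_bigr => i _.
by have := frob_dP i Ys; rewrite ltn_ord /frob_p /frob_q; lia.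
Qed.

End FrobeniusCoordinates.

(** * Shifted and bordered determinants *)

Section CofactorExpansions.
Variable K : comNzRingType.
Local Open Scope ring_scope.

Lemma sum_det_row_replace d (M X : 'M[K]_d) :
  \sum_(i < d) \det (\matrix_(r, c) if r == i then X r c else M r c)
  = \sum_(i < d) \sum_(j < d) X i j * cofactor M i j.
Proof.
apply: eq_bigr => i _; rewrite (expand_det_row _ i); apply: eq_bigr => j _.
rewrite mxE eqxx; congr (_ * (_ * \det _)); apply/matrixP => r c.
by rewrite !mxE eq_sym (negbTE (neq_lift i r)).
Qed.

Lemma sum_det_col_replace d (M Y : 'M[K]_d) :
  \sum_(j < d) \det (\matrix_(r, c) if c == j then Y r c else M r c)
  = \sum_(i < d) \sum_(j < d) Y i j * cofactor M i j.
Proof.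
rewrite [RHS]exchange_big; apply: eq_bigr => j _; rewrite (expand_det_col _ j).
apply: eq_bigr => i _; rewrite mxE eqxx; congr (_ * (_ * \det _)); apply/matrixP => r c.
by rewrite !mxE eq_sym (negbTE (neq_lift j c)).
Qed.

Lemma sum_affine_cofactor d (M : 'M[K]_d) (u v : 'I_d -> K) :
  \sum_(i < d) \sum_(j < d) (u i + v j + 1) * M i j * cofactor M i j
  = (\sum_(i < d) u i + \sum_(j < d) v j + d%:R) * \det M.
Proof.
have row_sum i : \sum_(j < d) M i j * cofactor M i j = \det M by rewrite -expand_det_row.
have col_sum j : \sum_(i < d) M i j * cofactor M i j = \det M by rewrite -expand_det_col.
transitivity (\sum_(i < d) \sum_(j < d) u i * (M i j * cofactor M i j)
  + \sum_(i < d) \sum_(j < d) v j * (M i j * cofactor M i j)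
  + \sum_(i < d) \sum_(j < d) M i j * cofactor M i j).
  rewrite -!big_split /=; apply: eq_bigr => i _.
  by rewrite -!big_split /=; apply: eq_bigr => j _; ring.
rewrite [X in _ + X + _]exchange_big /=.
under eq_bigr do rewrite -big_distrr /= row_sum.
under [X in _ + X + _]eq_bigr do rewrite -big_distrr /= col_sum.
under [X in _ + X]eq_bigr do rewrite row_sum.
by rewrite sumr_const card_ord -!mulr_suml -mulr_natl; ring.
Qed.

Lemma bump_ord n (i : 'I_n) : bump n i = i.
Proof. by rewrite /bump leqNgt ltn_ord. Qed.

Lemma det_bordered d (M : 'M[K]_d) (B : 'M[K]_d.+1) (a b : 'I_d -> K) t :
  (forall i j, B (lift ord_max i) (lift ord_max j) = M i j) ->
  (forall i, B (lift ord_max i) ord_max = a i) ->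
  (forall j, B ord_max (lift ord_max j) = b j) ->
  B ord_max ord_max = t ->
  \det B = t * \det M - \sum_(i < d) \sum_(j < d) a i * b j * cofactor M i j.
Proof.
move=> BM Ba Bb Bt.
rewrite (expand_det_col _ ord_max) big_ord_recr /= addrC; congr (_ + _).
  rewrite Bt /cofactor addnn -muln2 exprM sqrr_sign mul1r.
  by congr (_ * \det _); apply/matrixP => r c; rewrite !mxE BM.
rewrite -sumrN; apply: eq_bigr => i _.
have -> : widen_ord (leqnSn d) i = lift ord_max i by apply: val_inj; rewrite /= bump_ord.
rewrite Ba /cofactor.
case: d M B a b i BM Ba Bb Bt => [|d] M B a b i BM Ba Bb _; first by case: i.
rewrite (expand_det_row _ ord_max) big_distrr /= -sumrN big_distrr /=.
apply: eq_bigr => k _; rewrite !mxE.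
have -> : lift (lift ord_max i) ord_max = ord_max.
  by apply: val_inj; rewrite /= bump_ord /bump -ltnS ltn_ord.
rewrite Bb /cofactor.
have -> : row' ord_max (col' k (row' (lift ord_max i) (col' ord_max B)))
          = row' i (col' k M).
  apply/matrixP => r c; rewrite !mxE -BM; congr (B _ _); apply: val_inj.
  have le_bump : (bump i r <= d)%N.
    by rewrite /bump; case: (i <= r)%N; [exact: ltn_ord | exact: ltnW (ltn_ord r)].
  by rewrite /= ?bump_ord [in RHS]/bump leqNgt ltnS le_bump.
rewrite bump_ord.
have sign_eq : (-1) ^+ (i + d.+1) * (-1) ^+ (d + k) = - (-1) ^+ (i + k) :> K.
  rewrite -exprD (_ : (i + d.+1 + (d + k) = (i + k).+1 + 2 * d)%N); last by lia.
  by rewrite exprD exprS exprM sqrrN !expr1n mulr1 mulN1r.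
rewrite -[(-1) ^+ (i + k)]opprK -sign_eq.
change (nat_of_ord (@ord_max d)) with d.
ring.
Qed.
End CofactorExpansions.

Section ShiftedMinors.
Variables (K : comNzRingType) (m : nat -> nat -> K).
Local Open Scope ring_scope.

Definition mdet d (P Q : nat -> nat) := \det (\matrix_(i < d, j < d) m (P i) (Q j)).

Lemma eq_mdet d P Q P' Q' :
  {in gtn d, P =1 P'} -> {in gtn d, Q =1 Q'} -> mdet d P Q = mdet d P' Q'.
Proof.
by move=> eq_P eq_Q; congr (\det _); apply/matrixP => i j; rewrite !mxE eq_P ?eq_Q ?inE.
Qed.

Lemma mdet_dup_row d P Q i1 i2 :
  (i1 < d)%N -> (i2 < d)%N -> i1 != i2 -> P i1 = P i2 -> mdet d P Q = 0.
Proof.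
move=> lt_i1 lt_i2 ne_i eq_P.
apply: (@determinant_alternate _ _ _ (Ordinal lt_i1) (Ordinal lt_i2)) => [|j].
  by rewrite -val_eqE.
by rewrite !mxE /= eq_P.
Qed.

Lemma mdet_dup_col d P Q j1 j2 :
  (j1 < d)%N -> (j2 < d)%N -> j1 != j2 -> Q j1 = Q j2 -> mdet d P Q = 0.
Proof.
move=> lt_j1 lt_j2 ne_j eq_Q; rewrite /mdet -det_tr.
apply: (@determinant_alternate _ _ _ (Ordinal lt_j1) (Ordinal lt_j2)) => [|i].
  by rewrite -val_eqE.
by rewrite !mxE /= eq_Q.
Qed.

Hypothesis m_rec : forall p q : nat,
  m p.+1 q + m p q.+1 - (p + q + 1)%:R * m p q = m p 0%N * m 0%N q.

(* After expanding along the shifted or bordering lines, [m_rec] collapses the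
   coefficient of each cofactor of [M] to [(P i + Q j + 1) * M i j]. *)
Lemma sum_mdet_shift d (P Q : nat -> nat) :
  \sum_(i < d) mdet d (fun k => P k + (k == i))%N Q
  + \sum_(j < d) mdet d P (fun k => Q k + (k == j))%N
  + mdet d.+1 (fun k => if (k < d)%N then P k else 0%N)
              (fun k => if (k < d)%N then Q k else 0%N)
  = (m 0%N 0%N + (\sum_(i < d) (P i + Q i + 1))%N%:R) * mdet d P Q.
Proof.
set M := \matrix_(i < d, j < d) m (P i) (Q j).
pose X := \matrix_(i < d, j < d) m (P i).+1 (Q j).
pose Y := \matrix_(i < d, j < d) m (P i) (Q j).+1.
have rows : \sum_(i < d) mdet d (fun k => P k + (k == i))%N Q
    = \sum_(i < d) \det (\matrix_(r, c) if r == i then X r c else M r c).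
  apply: eq_bigr => i _; congr (\det _); apply/matrixP => r c; rewrite !mxE.
  case: (r =P i) => [-> | /eqP]; rewrite ?eqxx ?addn1 //.
  by rewrite -val_eqE => /negbTE ->; rewrite addn0.
have cols : \sum_(j < d) mdet d P (fun k => Q k + (k == j))%N
    = \sum_(j < d) \det (\matrix_(r, c) if c == j then Y r c else M r c).
  apply: eq_bigr => j _; congr (\det _); apply/matrixP => r c; rewrite !mxE.
  case: (c =P j) => [-> | /eqP]; rewrite ?eqxx ?addn1 //.
  by rewrite -val_eqE => /negbTE ->; rewrite addn0.
rewrite rows cols sum_det_row_replace sum_det_col_replace.
rewrite /mdet (@det_bordered _ d M _ (fun i => m (P i) 0%N) (fun j => m 0%N (Q j)) (m 0%N 0%N));
  last first.
- by rewrite mxE /= ltnn.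
- by move=> j; rewrite mxE /= ltnn bump_ord ltn_ord.
- by move=> i; rewrite mxE /= ltnn bump_ord ltn_ord.
- by move=> i j; rewrite !mxE /= !bump_ord !ltn_ord.
have weights : (\sum_(i < d) (P i + Q i + 1))%N%:R
    = \sum_(i < d) (P i)%:R + \sum_(j < d) (Q j)%:R + d%:R :> K.
  rewrite natr_sum -[d%:R]mulr1 -[d in d%:R](card_ord d) -sumr_const mulr1 -!big_split /=.
  by apply: eq_bigr => i _; rewrite !natrD.
rewrite -/M mulrDl weights -sum_affine_cofactor.
have -> : \sum_(i < d) \sum_(j < d) ((P i)%:R + (Q j)%:R + 1) * M i j * cofactor M i j
    = \sum_(i < d) \sum_(j < d) X i j * cofactor M i j
      + \sum_(i < d) \sum_(j < d) Y i j * cofactor M i j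
      - \sum_(i < d) \sum_(j < d) (m (P i) 0%N * m 0%N (Q j)) * cofactor M i j.
  rewrite -big_split -sumrB; apply: eq_bigr => i _.
  rewrite -big_split -sumrB; apply: eq_bigr => j _.
  by rewrite !mxE -m_rec !natrD /=; ring.
ring.
Qed.
End ShiftedMinors.

(** * Summing over the diagrams obtained by adding a box *)

Section FrobeniusMinors.
Variables (K : comNzRingType) (m : nat -> nat -> K).

Definition frob_minor s := mdet m (frob_d s) (frob_p s) (frob_q s).

Variable s : seq nat.
Hypothesis Ys : is_young s.
Local Notation l := (nth 0 s).
Local Notation d := (frob_d s).

Definition bordered_minor :=
  mdet m d.+1 (fun k => if k < d then frob_p s k else 0)
              (fun k => if k < d then frob_q s k else 0).

(* The minor of the diagram with a box added at the foot of column [j]; for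
   [j = d] that box is the new diagonal one. *)
Definition col_shift_minor j :=
  if j < d then mdet m d (frob_p s) (fun k => frob_q s k + (k == j)) else bordered_minor.

Lemma bordered_minor_not_addable :
  ~~ [&& addable s (yconj s d), d <= yconj s d & l (yconj s d) == d] ->
  bordered_minor = 0%R.
Proof.
move=> not_add; case: (posnP d) => [d0 | d_gt0].
  by move: not_add; rewrite frob_d0_diag_addable.
have le_dl := frob_d_le_nth Ys (ltac:(lia) : d.-1 < d).
have [lt_dl | ge_dl] := ltnP d (l d.-1); last first.
  apply: (@mdet_dup_row _ m d.+1 _ _ d.-1 d) => //; try lia.
  by rewrite ltnn (_ : d.-1 < d) /frob_p; lia.
have le_dy := frob_d_le_yconj Ys (ltac:(lia) : d.-1 < d).
have [lt_dy | ge_dy] := ltnP d (yconj s d.-1); last first.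
  apply: (@mdet_dup_col _ m d.+1 _ _ d.-1 d) => //; try lia.
  by rewrite ltnn (_ : d.-1 < d) /frob_q; lia.
have ld : l d = d by have := lt_dy; rewrite (yconjP _ _ Ys); have := nth_frob_d_le Ys; lia.
have yd : yconj s d = d.
  apply/eqP/eqn_gtP => k; rewrite (yconjP _ _ Ys).
  case: (ltnP k d) => [lt_kd | le_dk]; last by have := young_nth_le Ys le_dk; lia.
  by have := young_nth_le Ys (ltac:(lia) : k <= d.-1); lia.
move: not_add; rewrite yd ld eqxx leqnn /addable.
by rewrite (_ : (d == 0) = false) /= ?ld ?lt_dl //; lia.
Qed.

Lemma frob_minor_incr_outer i : d <= i -> i <= size s -> addable s i ->
  frob_minor (incr_nth s i) = col_shift_minor (l i).
Proof.
move=> le_di le_i add_i; rewrite /col_shift_minor /frob_minor.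
have [lt_ld | ge_ld] := ltnP (l i) d.
  rewrite (frob_d_incr_col Ys le_di le_i add_i lt_ld); apply: eq_mdet => k /[!inE] lt_kd.
    exact: frob_p_incr_col.
  exact: frob_q_incr_col.
have eq_ld : l i = d by apply/eqP; rewrite eqn_leq ge_ld nth_le_frob_d.
rewrite (frob_d_incr_diag Ys le_di le_i add_i eq_ld); apply: eq_mdet => k /[!inE] lt_kd.
  exact: frob_p_incr_diag.
exact: frob_q_incr_diag.
Qed.

Lemma sum_frob_minor_rows :
  (\sum_(i < (size s).+1 | addable s i && (i < d)%N) frob_minor (incr_nth s i)
   = \sum_(i < d) mdet m d (fun k => frob_p s k + (k == i))%N (frob_q s))%R.
Proof.
have le_d : d <= (size s).+1 by apply: leq_trans (frob_d_le_size Ys) (leqnSn _).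
rewrite (big_ord_widen _
  (fun i => mdet m d (fun k => frob_p s k + (k == i)) (frob_q s)) le_d).
rewrite [RHS](bigID (fun i : 'I_(size s).+1 => addable s i)) /=.
rewrite [X in (_ = _ + X)%R]big1 ?addr0 => [|i /andP [lt_id not_add]]; last first.
  have i_gt0 : 0 < i by move: not_add; rewrite /addable; case: (nat_of_ord i).
  apply: (@mdet_dup_row _ m d _ _ i.-1 i); try lia.
  by rewrite (_ : (i.-1 == i) = false) ?eqxx ?frob_p_not_addable ?addn0 ?addn1 //; lia.
apply: eq_big => [i | i /andP [add_i lt_id]]; first by rewrite andbC.
rewrite /frob_minor (frob_d_incr_row Ys lt_id add_i); apply: eq_mdet => k /[!inE] lt_kd.
  exact: frob_p_incr_row.
exact: frob_q_incr_row.
Qed.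

Lemma col_shift_minor_not_addable j : j < d -> l (yconj s j) != j ->
  col_shift_minor j = 0%R.
Proof.
move=> lt_jd ne_lj; have [j_gt0 q_pred] := frob_q_col_not_addable Ys lt_jd ne_lj.
by rewrite /col_shift_minor lt_jd; apply: (@mdet_dup_col _ m d _ _ j.-1 j); lia.
Qed.

Lemma sum_frob_minor_cols :
  (\sum_(i < (size s).+1 | addable s i && ~~ (i < d)%N) frob_minor (incr_nth s i)
   = \sum_(j < d.+1) col_shift_minor j)%R.
Proof.
(* A box added in row i >= d lies in column l i <= d, and the only row where a
   box can be added to column j is yconj s j. *)
transitivity (\sum_(i < (size s).+1 | addable s i && ~~ (i < d)%N)
   \sum_(j < d.+1) (if l i == j then frob_minor (incr_nth s i) else 0))%R.
  apply: eq_bigr => i /andP [add_i]; rewrite -leqNgt => le_di.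
  have lt_l : l i < d.+1 by rewrite ltnS nth_le_frob_d.
  rewrite (bigD1 (Ordinal lt_l)) //= eqxx big1 ?addr0 // => j ne_j.
  by rewrite (_ : (l i == j) = false) //; apply/negbTE; apply: contra ne_j => /eqP eq_j;
    apply/eqP/val_inj.
rewrite exchange_big /=; apply: eq_bigr => j _.
set i0 := yconj s j.
have lt_i0 : i0 < (size s).+1 by rewrite ltnS count_size.
have row_of_col i : addable s i -> l i = j -> i = i0.
  by move=> add_i eq_l; rewrite /i0 -eq_l yconj_addable.
case col_addable : [&& addable s i0, d <= i0 & l i0 == j].
  move/and3P: col_addable => [add_i0 le_di0 /eqP eq_l].
  rewrite (bigD1 (Ordinal lt_i0)) /=; last by rewrite add_i0 -leqNgt le_di0.
  rewrite eq_l eqxx big1 ?addr0 => [|i /andP [/andP [add_i _] ne_i]].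
    by rewrite frob_minor_incr_outer ?eq_l // -ltnS.
  case: eqP => // eq_l'; move: ne_i; rewrite -val_eqE /= (row_of_col _ add_i eq_l') eqxx //.
rewrite big1 => [|i /andP [add_i not_lt]]; last first.
  case: eqP => // eq_l'; move: col_addable.
  rewrite -(row_of_col _ add_i eq_l') add_i eq_l' eqxx andbT.
  by rewrite -leqNgt in not_lt; rewrite not_lt.
case: (ltnP j d) => [lt_jd | le_dj].
  apply/esym/col_shift_minor_not_addable => //; apply/negP => /eqP eq_l.
  have add_i0 : addable s i0.
    have le_di0 := frob_d_le_yconj Ys lt_jd.
    have le_lj : l i0 <= j by rewrite leqNgt -(yconjP _ _ Ys) ltnn.
    have : j < l i0.-1 by rewrite -(yconjP _ _ Ys); lia.
    by rewrite /addable; lia.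
  by move: col_addable; rewrite add_i0 frob_d_le_yconj // eq_l eqxx.
have eq_j : (j : nat) = d by have := ltn_ord j; lia.
rewrite /col_shift_minor eq_j ltnn; apply/esym/bordered_minor_not_addable.
by move: col_addable; rewrite /i0 eq_j => ->.
Qed.

Hypothesis m_rec : forall p q : nat,
  (m p.+1 q + m p q.+1 - (p + q + 1)%:R * m p q = m p 0%N * m 0%N q)%R.

Lemma sum_frob_minor_incr :
  (\sum_(i < (size s).+1 | addable s i) frob_minor (incr_nth s i)
   = (m 0%N 0%N + (ysize s)%:R) * frob_minor s)%R.
Proof.
rewrite (bigID (fun i : 'I_(size s).+1 => (i < d)%N)) /=.
rewrite sum_frob_minor_rows sum_frob_minor_cols big_ord_recr /= /col_shift_minor ltnn.
under [X in (_ + (X + _))%R]eq_bigr => j _ do rewrite ltn_ord.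
by rewrite addrA sum_mdet_shift // (ysize_frob Ys).
Qed.
End FrobeniusMinors.

Unset Implicit Arguments.
Local Open Scope ring_scope.

Theorem theorem8p1 (R : realType) (t : R[i]) (m : nat -> nat -> R[i])
  (ht : forall k : nat, t != - k%:R)
  (hrec : forall p q : nat,
     m p.+1 q + m p q.+1 - (p + q + 1)%:R * m p q = m p 0%N * m 0%N q)
  (h00 : m 0%N 0%N = t)
  (lam : seq nat) (hlam : is_young lam)
  (succ : seq (seq nat)) (hsuniq : uniq succ)
  (hsucc : forall nu : seq nat, nu \in succ <-> adds_box nu lam) :
  phi t m lam = \sum_(nu <- succ) phi t m nu.
Proof.
have phiE nu : phi t m nu = frob_minor m nu / \prod_(k < ysize nu) (t + k%:R) by [].
have tn_neq0 : t + (ysize lam)%:R != 0 by rewrite addr_eq0 ht.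
rewrite (big_adds_box _ _ hlam hsuniq hsucc).
under eq_bigr => i _ do rewrite phiE /ysize sumn_incr_nth big_ord_recr /=.
rewrite -mulr_suml (sum_frob_minor_incr hlam hrec) h00 phiE invfM.
by rewrite -/(ysize lam) [_ * frob_minor _ _]mulrC mulrA (mulrAC _ (t + _)) mulfK.
Qed.
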